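(* Let $A$ be a unital commutative Banach algebra, $X$ a compact Hausdorff space, and $f:X\to A$ a continuous function. If $f(X)$ generates $A$, then the map $\Phi:\mathfrak{M}(A)\to \vec{\mathrm{sp}}(f)$, $\phi\mapsto\phi\circ f$, is a homeomorphism.
   Context: $\mathfrak{M}(A)$ denotes the character space of $A$ (nonzero multiplicative linear functionals, with the weak* topology). ''$f(X)$ generates $A$'' means that $A$ is the smallest closed subalgebra of $A$ containing $f(X)$ and the unit. The joint spectrum $\vec{\mathrm{sp}}(f)$ is the set of all functions $\lambda:X\to\mathbb{C}$ such that the ideal of $A$ generated by $\{\lambda(x)\mathbf 1-f(x):x\in X\}$ is proper; equivalently $\vec{\mathrm{sp}}(f)=\{\phi\circ f:\phi\in\mathfrak{M}(A)\}$. For continuous $f$ it is a compact subset of $C(X)$, and is given the topology of the uniform norm $\|g\|_X=\sup_{x\in X}|g(x)|$. *)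

From HB Require Import structures.
From mathcomp Require Import all_boot all_order all_algebra.
From mathcomp Require Import all_classical all_reals all_analysis.
From mathcomp Require Import complex.
Set Implicit Arguments. Unset Strict Implicit. Unset Printing Implicit Defensive.
Import Order.TTheory GRing.Theory Num.Theory.
Import numFieldTopology.Exports numFieldNormedType.Exports.
Local Open Scope classical_set_scope.
Local Open Scope ring_scope.

(* The complex numbers R[i] get the metric topology of their norm
   (MathComp-Analysis only declares it generically on R^o). *)
HB.instance Definition _ (R : rcfType) :=
  PseudoPointedMetric.copy R[i] (R[i])^o.

(* A (complex) Banach space A : completeNormedModType R[i] is a unital
   commutative Banach algebra for the multiplication [mul] and unit [one]
   when the following axioms hold.  (HB cannot join ComAlgebra with
   NormedModule over R[i], because of the existing NumDomain join, so the
   algebra structure is given by explicit operations.) *)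
Record is_comBanachAlg (R : realType) (A : completeNormedModType R[i])
    (mul : A -> A -> A) (one : A) : Prop := {
  ba_mulA : forall x y z, mul x (mul y z) = mul (mul x y) z ;
  ba_mulC : forall x y, mul x y = mul y x ;
  ba_mul1 : forall x, mul one x = x ;
  ba_mulDl : forall x y z, mul (x + y) z = mul x z + mul y z ;
  ba_mulZl : forall (k : R[i]) x y, mul (k *: x) y = k *: mul x y ;
  ba_normM : forall x y, `|mul x y| <= `|x| * `|y| ;
  ba_norm1 : `|one| = 1
}.

Section Defs.
Variables (R : realType) (A : completeNormedModType R[i])
  (mul : A -> A -> A) (one : A).

Definition character (phi : A -> R[i]) : Prop :=
  [/\ forall (k : R[i]) (x y : A), phi (k *: x + y) = k * phi x + phi y,
      forall x y : A, phi (mul x y) = phi x * phi y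
    & exists x : A, phi x != 0].

Definition char_space : set (A -> R[i]) := [set phi | character phi].

Definition closed_subalgebra (S : set A) : Prop :=
  [/\ S one, forall x y, S x -> S y -> S (x + y),
      forall (k : R[i]) x, S x -> S (k *: x),
      forall x y, S x -> S y -> S (mul x y)
    & closed S].

Definition generates (G : set A) : Prop :=
  forall S : set A, closed_subalgebra S -> G `<=` S -> S = setT.

Definition ideal_gen (G : set A) : set A :=
  [set a | exists s : seq (A * A),
      (forall p, p \in s -> G p.2) /\ a = \sum_(p <- s) mul p.1 p.2].

Definition joint_spectrum (X : Type) (f : X -> A) : set (X -> R[i]) :=
  [set lambda | ~ ideal_gen [set lambda x *: one - f x | x in [set: X]] one].

End Defs.

(** For [lam] in the joint spectrum let [J] be the closure of the ideal
    generated by the [lam x *: one - f x].  A Neumann series shows that [one]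
    is not in [J], hence [|k| <= |a|] whenever [k *: one - a] lies in [J]; so
    such a scalar [k] is unique and the elements of [A] congruent to a scalar
    modulo [J] form a closed unital subalgebra (closedness uses completeness
    of the complex numbers).  It contains [f x] (congruent to [lam x]), so it
    is all of [A], and [a |-> k] is a character [chi] with [chi \o f = lam].
    Two characters that agree on [f(X)] agree on a closed unital subalgebra,
    hence everywhere; thus [Phi] is bijective with inverse [lam |-> chi].
    Characters are 1-Lipschitz, which together with compactness of [X] makes
    [Phi] continuous; and the [a] for which [lam |-> chi a] is continuous on
    the joint spectrum again form a closed unital subalgebra containing
    [f(X)], which makes the inverse continuous. *)

From HB Require Import structures.
From mathcomp Require Import all_boot all_order all_algebra.
From mathcomp Require Import all_classical all_reals all_analysis.
From mathcomp Require Import complex ring.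
Import Order.TTheory GRing.Theory Num.Theory.
Import numFieldTopology.Exports numFieldNormedType.Exports.
Local Open Scope classical_set_scope.
Local Open Scope ring_scope.
Set Implicit Arguments. Unset Strict Implicit. Unset Printing Implicit Defensive.

Lemma mul_lt_of_lt_div_succ (R : numFieldType) (M x e : R) : 0 <= M -> 0 <= x ->
  x < e / (M + 1) -> M * x < e.
Proof.
move=> M0 x0 h; have M1 : 0 < M + 1 by rewrite ltr_wpDl.
apply: le_lt_trans (_ : M * x <= (M + 1) * x) _.
  by rewrite ler_wpM2r // lerDl.
by rewrite mulrC -ltr_pdivlMr.
Qed.

Lemma thirdr (F : numFieldType) (x : F) : x = x / 3 + x / 3 + x / 3.
Proof. by field. Qed.

Definition cauchy_seq (K : numDomainType) (V : normedZmodType K) (u : nat -> V) :=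
  forall e : K, 0 < e -> exists N, forall n, (N <= n)%N -> `|u N - u n| < e.

Definition seq_cvg_to (K : numDomainType) (V : normedZmodType K) (u : nat -> V) l :=
  forall e : K, 0 < e -> exists N, forall n, (N <= n)%N -> `|u n - l| < e.

Lemma cauchy_seq_cauchy (K : numFieldType) (V : pseudoMetricNormedZmodType K)
    (u : nat -> V) :
  cauchy_seq u -> cauchy (u @ \oo).
Proof.
move=> h; apply/cauchyP => e e0; have [N hN] := h e e0.
by exists (u N), N => // n /hN; rewrite -ball_normE.
Qed.

Section ComplexSequences.
Variable R : realType.
Local Open Scope complex_scope.
Local Notation Re := complex.Re.
Local Notation Im := complex.Im.

Lemma gtC0_real (e : R[i]) : 0 < e -> e = (Re e)%:C /\ 0 < Re e.
Proof. by case: e => a b; rewrite ltcE /= => /andP[/eqP -> ha]. Qed.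

Lemma geC0_real (e : R[i]) : 0 <= e -> e = (Re e)%:C /\ 0 <= Re e.
Proof. by case: e => a b; rewrite lecE /= => /andP[/eqP -> ha]. Qed.

Lemma exprn_lt_eps (r : R[i]) : 0 <= r -> r < 1 ->
  forall e, 0 < e -> exists N, r ^+ N < e.
Proof.
move=> /geC0_real [-> r0] r1 e /gtC0_real [-> e0].
move: r1; rewrite -[1]/(1%:C) ltcR => r1.
have := @cvg_geometric R 1 (Re r).
rewrite ger0_norm // => /(_ r1) /cvgrPdist_lt /(_ _ e0) [N _ hN].
exists N; rewrite -rmorphXn /= ltcR.
by have := hN N (leqnn N); rewrite /geometric /= sub0r normrN mul1r ger0_norm ?exprn_ge0.
Qed.

Lemma normc_ge_Im (z : R[i]) : `|Im z|%:C <= `|z|.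
Proof. by rewrite normc_def lecR -sqrtr_sqr ler_wsqrtr // lerDr sqr_ge0. Qed.

Lemma normc_le_ReIm (z : R[i]) : `|z| <= (`|Re z| + `|Im z|)%:C.
Proof.
rewrite {1}[z]complexE; apply: le_trans (ler_normD _ _) _.
have normcR (a : R) : `|a%:C| = `|a|%:C.
  by rewrite normc_def /= expr0n addr0 sqrtr_sqr.
have normci : `|'i| = 1 :> R[i] by rewrite normc_def /= expr0n add0r expr1n sqrtr1.
by rewrite normrM normci !normcR mul1r rmorphD.
Qed.

Lemma cauchy_seqR_cvg (v : nat -> R) : cauchy_seq v -> exists l, seq_cvg_to v l.
Proof.
move=> /cauchy_seq_cauchy /R_complete /cvg_ex [l /cvgrPdist_lt hl]; exists l => e e0.
by have [N _ hN] := hl e e0; exists N => n /hN; rewrite distrC.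
Qed.

(* [R[i]] carries no [completeType] structure: completeness is obtained from
   that of [R] through real and imaginary parts. *)
Lemma cauchy_seqC_cvg (u : nat -> R[i]) : cauchy_seq u -> exists l, seq_cvg_to u l.
Proof.
move=> h; have [lr hr] : exists l, seq_cvg_to (fun n => Re (u n)) l.
  apply: cauchy_seqR_cvg => e e0; have [|N hN] := h e%:C; first by rewrite ltcR.
  exists N => n /hN hn; rewrite -ltcR -raddfB; exact: le_lt_trans (normc_ge_Re _) hn.
have [li hi] : exists l, seq_cvg_to (fun n => Im (u n)) l.
  apply: cauchy_seqR_cvg => e e0; have [|N hN] := h e%:C; first by rewrite ltcR.
  exists N => n /hN hn; rewrite -ltcR -raddfB; exact: le_lt_trans (normc_ge_Im _) hn.
exists (lr +i* li) => e /gtC0_real [-> e0].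
have e2 : 0 < Re e / 2 by rewrite divr_gt0.
have [N1 h1] := hr _ e2; have [N2 h2] := hi _ e2.
exists (maxn N1 N2) => n; rewrite geq_max => /andP[n1 n2].
apply: le_lt_trans (normc_le_ReIm _) _; rewrite ltcR [Re e]splitr !raddfB /=.
by apply: ltrD; [exact: h1 | exact: h2].
Qed.

End ComplexSequences.

Section BanachAlgebra.
Variables (R : realType) (A : completeNormedModType R[i]).
Variables (mul : A -> A -> A) (one : A).
Hypothesis HA : is_comBanachAlg mul one.

Lemma bmulA x y z : mul x (mul y z) = mul (mul x y) z. Proof. exact: (ba_mulA HA). Qed.
Lemma bmulC x y : mul x y = mul y x. Proof. exact: (ba_mulC HA). Qed.
Lemma bmul1r x : mul one x = x. Proof. exact: (ba_mul1 HA). Qed.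
Lemma bmulr1 x : mul x one = x. Proof. by rewrite bmulC bmul1r. Qed.
Lemma bmulDl x y z : mul (x + y) z = mul x z + mul y z. Proof. exact: (ba_mulDl HA). Qed.
Lemma bmulDr x y z : mul x (y + z) = mul x y + mul x z.
Proof. by rewrite bmulC bmulDl !(bmulC x). Qed.
Lemma bmulZl k x y : mul (k *: x) y = k *: mul x y. Proof. exact: (ba_mulZl HA). Qed.
Lemma bmulZr k x y : mul x (k *: y) = k *: mul x y.
Proof. by rewrite bmulC bmulZl bmulC. Qed.
Lemma bmul0r x : mul x 0 = 0.
Proof. by have := bmulZr 0 x 0; rewrite !scale0r. Qed.
Lemma bmulNr x y : mul x (- y) = - mul x y.
Proof. by rewrite -scaleN1r bmulZr scaleN1r. Qed.
Lemma bmulBl x y z : mul (x - y) z = mul x z - mul y z.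
Proof. by rewrite bmulC bmulDr bmulNr !(bmulC z). Qed.
Lemma bmulBr x y z : mul x (y - z) = mul x y - mul x z.
Proof. by rewrite bmulDr bmulNr. Qed.
Lemma bnormM x y : `|mul x y| <= `|x| * `|y|. Proof. exact: (ba_normM HA). Qed.
Lemma bnorm1 : `|one| = 1. Proof. exact: (ba_norm1 HA). Qed.

Lemma bscaleE k x : k *: x = mul (k *: one) x.
Proof. by rewrite bmulZl bmul1r. Qed.

Lemma bmul_suml (I : Type) (s : seq I) (F : I -> A) y :
  mul (\sum_(i <- s) F i) y = \sum_(i <- s) mul (F i) y.
Proof.
elim: s => [|a s IH]; first by rewrite !big_nil bmulC bmul0r.
by rewrite !big_cons bmulDl IH.
Qed.

Definition bexp b n := iter n (mul b) one.

Lemma norm_bexp b n : `|bexp b n| <= `|b| ^+ n.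
Proof.
elim: n => [|n IH] /=; first by rewrite bnorm1 expr0.
by rewrite exprS; apply: le_trans (bnormM _ _) _; rewrite ler_wpM2l.
Qed.

Definition geo_sum b n := \sum_(k < n) bexp b k.

Lemma mul_geo_sum b n : mul (one - b) (geo_sum b n) = one - bexp b n.
Proof.
rewrite /geo_sum; elim: n => [|n IH]; first by rewrite big_ord0 bmul0r subrr.
by rewrite big_ord_recr bmulDr IH bmulBl bmul1r addrA subrK.
Qed.

Lemma norm_geo_sumB b n j : `|b| <= 1 ->
  `|geo_sum b (n + j) - geo_sum b n| * (1 - `|b|) <= `|b| ^+ n - `|b| ^+ (n + j).
Proof.
move=> b1; have r0 : 0 <= 1 - `|b| by rewrite subr_ge0.
elim: j => [|j IH]; first by rewrite addn0 !subrr normr0 mul0r.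
rewrite addnS {1}/geo_sum big_ord_recr /= -/(geo_sum b (n + j)) addrAC.
apply: le_trans (ler_wpM2r r0 (ler_normD _ _)) _.
rewrite mulrDl; apply: le_trans (lerD IH (ler_wpM2r r0 (norm_bexp b (n + j)))) _.
by rewrite exprS mulrBr mulr1 addrA subrK mulrC.
Qed.

Lemma geo_sum_cauchy b : `|b| < 1 -> cauchy_seq (geo_sum b).
Proof.
move=> b1 e e0; have r1 : 0 < 1 - `|b| by rewrite subr_gt0.
have [N hN] := exprn_lt_eps (normr_ge0 b) b1 (mulr_gt0 e0 r1).
exists N => n Nn; rewrite -(subnKC Nn) distrC -(ltr_pM2r r1).
apply: le_lt_trans (norm_geo_sumB N (n - N) (ltW b1)) (le_lt_trans _ hN).
by rewrite lerBlDr lerDl exprn_ge0.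
Qed.

Lemma neumann_inv b : `|b| < 1 -> exists u, mul u (one - b) = one.
Proof.
move=> b1.
have /cauchy_cvg/cvg_ex[l /cvgrPdist_lt hl] := cauchy_seq_cauchy (geo_sum_cauchy b1).
exists l; rewrite bmulC; apply/eqP; rewrite -subr_eq0 -normr_le0.
apply/ler_addgt0Pr => e e0; rewrite add0r; apply: ltW; set c := one - b.
have c1 := normr_ge0 c.
have [N1 _ h1] := hl _ (divr_gt0 (divr_gt0 e0 (ltr0n _ 2)) (ltr_wpDl c1 ltr01)).
have [N2 hN2] := exprn_lt_eps (normr_ge0 b) b1 (divr_gt0 e0 (ltr0n _ 2)).
set n := maxn N1 N2.
have -> : mul c l - one = mul c (l - geo_sum b n) - bexp b n.
  by rewrite bmulBr mul_geo_sum opprB addrA addrAC addrK.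
apply: le_lt_trans (ler_normB _ _) _; rewrite [e]splitr; apply: ltr_leD.
  apply: le_lt_trans (bnormM _ _) (mul_lt_of_lt_div_succ c1 (normr_ge0 _) _).
  exact: h1 (leq_maxl N1 N2).
apply: le_trans (norm_bexp b n) (ltW (le_lt_trans _ hN2)).
by rewrite ler_wiXn2l ?normr_ge0 ?(ltW b1) ?leq_maxr.
Qed.

End BanachAlgebra.

Section Characters.
Variables (R : realType) (A : completeNormedModType R[i]).
Variables (mul : A -> A -> A) (one : A).
Hypothesis HA : is_comBanachAlg mul one.
Variable phi : A -> R[i].
Hypothesis hphi : character mul phi.

Lemma charM x y : phi (mul x y) = phi x * phi y. Proof. by case: hphi. Qed.

Lemma charD x y : phi (x + y) = phi x + phi y.
Proof. by case: hphi => lin _ _; have := lin 1 x y; rewrite scale1r mul1r. Qed.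

Lemma char0 : phi 0 = 0.
Proof. by apply: (addrI (phi 0)); rewrite -charD !addr0. Qed.

Lemma charZ k x : phi (k *: x) = k * phi x.
Proof. by case: hphi => lin _ _; rewrite -[k *: x]addr0 lin char0 addr0. Qed.

Lemma charB x y : phi (x - y) = phi x - phi y.
Proof. by rewrite charD -scaleN1r charZ mulN1r. Qed.

Lemma char1 : phi one = 1.
Proof.
case: hphi => _ _ [x x0]; apply: (mulIf x0).
by rewrite mul1r -charM (bmul1r HA).
Qed.

Lemma char_sum (I : Type) (s : seq I) (F : I -> A) :
  phi (\sum_(i <- s) F i) = \sum_(i <- s) phi (F i).
Proof.
elim: s => [|a s IH]; first by rewrite !big_nil char0.
by rewrite !big_cons charD IH.
Qed.

Lemma char_joint_spectrum (X : Type) (f : X -> A) : joint_spectrum mul one f (phi \o f).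
Proof.
move=> [s [hs def1]]; have := congr1 phi def1.
rewrite char1 char_sum big1_seq => [/eqP|]; first by rewrite oner_eq0.
by move=> p /andP[_ /hs [x _ <-]]; rewrite charM charB charZ char1 mulr1 subrr mulr0.
Qed.

End Characters.

Lemma closure_normP (K : numFieldType) (V : pseudoMetricNormedZmodType K)
    (S : set V) a :
  closure S a <-> forall e : K, 0 < e -> exists2 b, S b & `|a - b| < e.
Proof.
split=> [clSa e e0 | h B /nbhs_ballP[e e0 aeB]].
  by have [b [Sb]] := clSa _ (nbhsx_ballx a e e0); rewrite -ball_normE; exists b.
by have [b Sb ab] := h e e0; exists b; split => //; apply: aeB; rewrite -ball_normE.
Qed.

Lemma closure_seq (K : numFieldType) (V : pseudoMetricNormedZmodType K)
    (S : set V) a (r : K) : 0 < r -> closure S a ->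
  exists b : nat -> V, forall n, S (b n) /\ `|a - b n| < r ^+ n.
Proof.
move=> r0 /closure_normP clSa.
suff /choice[b hb] : forall n, exists b, S b /\ `|a - b| < r ^+ n by exists b.
by move=> n; have [b Sb ab] := clSa _ (exprn_gt0 n r0); exists b.
Qed.

Section Ideals.
Variables (R : realType) (A : completeNormedModType R[i]).
Variables (mul : A -> A -> A) (one : A).
Hypothesis HA : is_comBanachAlg mul one.

Definition ideal (I : set A) : Prop :=
  [/\ I 0, forall y z, I y -> I z -> I (y + z) & forall c y, I y -> I (mul c y)].

Lemma ideal_gen_ideal (G : set A) : ideal (ideal_gen mul G).
Proof.
split; first by exists [::]; rewrite big_nil.
- move=> _ _ [s1 [h1 ->]] [s2 [h2 ->]]; exists (s1 ++ s2); rewrite big_cat.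
  by split=> // p; rewrite mem_cat => /orP[/h1|/h2].
- move=> c _ [s [h ->]]; exists [seq (mul c p.1, p.2) | p <- s]; split.
    by move=> p /mapP[q qs ->] /=; exact: h.
  rewrite big_map (bmulC HA) (bmul_suml HA); apply: eq_bigr => p _ /=.
  by rewrite (bmulC HA) (bmulA HA).
Qed.

Lemma sub_ideal_gen (G : set A) : G `<=` ideal_gen mul G.
Proof.
move=> g Gg; exists [:: (one, g)]; split; first by move=> p; rewrite inE => /eqP ->.
by rewrite big_seq1 (bmul1r HA).
Qed.

Variable I : set A.
Hypothesis hI : ideal I.

Lemma idealD y z : I y -> I z -> I (y + z). Proof. by case: hI => _ + _; apply. Qed.
Lemma idealM c y : I y -> I (mul c y). Proof. by case: hI => _ _; apply. Qed.
Lemma idealZ k y : I y -> I (k *: y). Proof. by rewrite (bscaleE HA); apply: idealM. Qed.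
Lemma closure_ideal : ideal (closure I).
Proof.
case: hI => I0 _ _; split; first exact: subset_closure.
- move=> y z /closure_normP Jy /closure_normP Jz; apply/closure_normP => e e0.
  have [y' Iy' hy] := Jy _ (divr_gt0 e0 (ltr0n _ 2)).
  have [z' Iz' hz] := Jz _ (divr_gt0 e0 (ltr0n _ 2)).
  exists (y' + z'); first exact: idealD.
  rewrite opprD addrACA [e]splitr; apply: le_lt_trans (ler_normD _ _) (ltrD hy hz).
- move=> c y /closure_normP Jy; apply/closure_normP => e e0.
  have [y' Iy' hy] := Jy _ (divr_gt0 e0 (ltr_wpDl (normr_ge0 c) ltr01)).
  exists (mul c y'); first exact: idealM.
  rewrite -(bmulBr HA); apply: le_lt_trans (bnormM HA _ _) _.
  exact: mul_lt_of_lt_div_succ hy.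
Qed.

Lemma one_notin_closure_ideal : ~ I one -> ~ closure I one.
Proof.
move=> I1 /closure_normP/(_ _ ltr01)[z Iz /(neumann_inv HA)[u]].
by rewrite subKr => uz1; apply: I1; rewrite -uz1; apply: idealM.
Qed.

End Ideals.

Section ProperClosedIdeal.
Variables (R : realType) (A : completeNormedModType R[i]).
Variables (mul : A -> A -> A) (one : A).
Hypothesis HA : is_comBanachAlg mul one.
Variable J : set A.
Hypotheses (hJ : ideal mul J) (J_closed : closed J) (J1 : ~ J one).

Definition equiv_scalar a k := J (k *: one - a).
Definition scalar_mod := [set a | exists k, equiv_scalar a k].

Lemma equiv_scalar1 : equiv_scalar one 1.
Proof. by rewrite /equiv_scalar scale1r subrr; case: hJ. Qed.

Lemma equiv_scalarD a b k l : equiv_scalar a k -> equiv_scalar b l ->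
  equiv_scalar (a + b) (k + l).
Proof.
rewrite /equiv_scalar => ak bl.
have -> : (k + l) *: one - (a + b) = (k *: one - a) + (l *: one - b).
  by rewrite scalerDl opprD addrACA.
exact: (idealD hJ ak bl).
Qed.

Lemma equiv_scalarZ c a k : equiv_scalar a k -> equiv_scalar (c *: a) (c * k).
Proof.
rewrite /equiv_scalar => ak.
by rewrite -scalerA -scalerBr; exact: (idealZ HA hJ c ak).
Qed.

Lemma equiv_scalarM a b k l : equiv_scalar a k -> equiv_scalar b l ->
  equiv_scalar (mul a b) (k * l).
Proof.
rewrite /equiv_scalar => ak bl.
have -> : (k * l) *: one - mul a b = k *: (l *: one - b) + mul b (k *: one - a).
  rewrite (bmulBr HA) (bmulZr HA) (bmulr1 HA) (bmulC HA b a) scalerBr scalerA.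
  by rewrite addrA subrK.
exact: (idealD hJ (idealZ HA hJ k bl) (idealM hJ b ak)).
Qed.

Lemma equiv_scalar_bound a k : equiv_scalar a k -> `|k| <= `|a|.
Proof.
move=> ak; rewrite real_leNgt ?normr_real //; apply/negP => lt_a.
have k0 : k != 0 by rewrite -normr_gt0 (le_lt_trans _ lt_a).
have [|u hu] := neumann_inv HA (b := k^-1 *: a).
  by rewrite normrZ normfV mulrC ltr_pdivrMr ?mul1r ?normr_gt0.
have {}hu : mul u (k^-1 *: (k *: one - a)) = one.
  by rewrite scalerBr scalerA mulVf // scale1r.
apply: J1; rewrite -hu (bmulZr HA); exact: (idealZ HA hJ _ (idealM hJ u ak)).
Qed.

Lemma equiv_scalar_lipschitz a b k l : equiv_scalar a k -> equiv_scalar b l ->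
  `|k - l| <= `|a - b|.
Proof.
move=> ak bl; have := equiv_scalar_bound (equiv_scalarD ak (equiv_scalarZ (-1) bl)).
by rewrite !scaleN1r mulN1r.
Qed.

Lemma equiv_scalar_uniq a k l : equiv_scalar a k -> equiv_scalar a l -> k = l.
Proof.
move=> ak al; apply/eqP; rewrite -subr_eq0 -normr_le0.
by have := equiv_scalar_lipschitz ak al; rewrite subrr normr0.
Qed.

Lemma scalar_mod_closed : closed scalar_mod.
Proof.
(* The scalars of an approximating sequence are Cauchy by
   [equiv_scalar_lipschitz]; their limit works since [J] is closed. *)
have h0 : 0 < 2^-1 :> R[i] by rewrite invr_gt0.
have h1 : 2^-1 < 1 :> R[i] by rewrite invf_lt1 ?ltr1n.
have e2 (e : R[i]) : 0 < e -> 0 < e / 2 by move=> e0; rewrite divr_gt0.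
move=> a /(closure_seq h0)[b hb].
have /choice[k hk] : forall n, exists k, equiv_scalar (b n) k by move=> n; exact: (hb n).1.
have near_a n m : (m <= n)%N -> `|a - b n| < 2^-1 ^+ m.
  by move=> mn; apply: lt_le_trans (hb n).2 _; rewrite ler_wiXn2l ?ltW.
have [l hl] : exists l, seq_cvg_to k l.
  apply: cauchy_seqC_cvg => e e0; have [N hN] := exprn_lt_eps (ltW h0) h1 (e2 _ e0).
  exists N => n Nn; apply: le_lt_trans (equiv_scalar_lipschitz (hk N) (hk n)) _.
  rewrite [e]splitr; apply: le_lt_trans (ler_distD a _ _) (ltrD _ _).
    by rewrite distrC (lt_trans (near_a N N (leqnn N))).
  exact: lt_trans (near_a n N Nn) hN.
exists l; apply: J_closed; apply/closure_normP => e e0.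
have [N1 hN1] := hl _ (e2 _ e0); have [N2 hN2] := exprn_lt_eps (ltW h0) h1 (e2 _ e0).
set n := maxn N1 N2; exists (k n *: one - b n); first exact: hk.
have -> : l *: one - a - (k n *: one - b n) = (l - k n) *: one + (b n - a).
  by rewrite scalerBl opprB addrACA [RHS]addrACA (addrC (- a)).
apply: le_lt_trans (ler_normD _ _) _; rewrite normrZ (bnorm1 HA) mulr1 [e]splitr.
rewrite distrC (distrC (b n)); apply: ltrD; first exact/hN1/leq_maxl.
exact: lt_trans (near_a n N2 (leq_maxr N1 N2)) hN2.
Qed.

Lemma scalar_mod_subalgebra : closed_subalgebra mul one scalar_mod.
Proof.
split; last exact: scalar_mod_closed.
- by exists 1; exact: equiv_scalar1.
- by move=> a b [k ak] [l bl]; exists (k + l); exact: equiv_scalarD.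
- by move=> c a [k ak]; exists (c * k); exact: equiv_scalarZ.
- by move=> a b [k ak] [l bl]; exists (k * l); exact: equiv_scalarM.
Qed.

End ProperClosedIdeal.

Section CharacterNorm.
Variables (R : realType) (A : completeNormedModType R[i]).
Variables (mul : A -> A -> A) (one : A).
Hypothesis HA : is_comBanachAlg mul one.
Variable phi : A -> R[i].
Hypothesis hphi : character mul phi.

Lemma char_ker_ideal : ideal mul [set a | phi a = 0].
Proof.
split=> /= [|y z y0 z0|c y y0]; first exact: (char0 hphi).
  by rewrite (charD hphi) y0 z0 addr0.
by rewrite (charM hphi) y0 mulr0.
Qed.

Lemma norm_char_le a : `|phi a| <= `|a|.
Proof.
apply: (equiv_scalar_bound HA char_ker_ideal) => /=.
  by rewrite (char1 HA hphi); apply/eqP; exact: oner_neq0.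
by rewrite /equiv_scalar /= (charB hphi) (charZ hphi) (char1 HA hphi) mulr1 subrr.
Qed.

Lemma char_lipschitz a b : `|phi a - phi b| <= `|a - b|.
Proof. by rewrite -(charB hphi) norm_char_le. Qed.

End CharacterNorm.

Section QuotientCharacter.
Variables (R : realType) (A : completeNormedModType R[i]).
Variables (mul : A -> A -> A) (one : A).
Hypothesis HA : is_comBanachAlg mul one.
Variable J : set A.
Hypotheses (hJ : ideal mul J) (J1 : ~ J one).
Hypothesis J_full : forall a, scalar_mod one J a.

Definition quot_char a : R[i] := xget 0 (equiv_scalar one J a).

Lemma quot_charP a : equiv_scalar one J a (quot_char a).
Proof. exact: xgetPex (J_full a). Qed.

Lemma quot_char_eq a k : equiv_scalar one J a k -> quot_char a = k.
Proof. exact: (equiv_scalar_uniq HA hJ J1 (quot_charP a)). Qed.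

Lemma quot_char_character : character mul quot_char.
Proof.
split.
- move=> k x y; apply: quot_char_eq.
  exact: (equiv_scalarD hJ (equiv_scalarZ HA hJ k (quot_charP x)) (quot_charP y)).
- move=> x y; apply: quot_char_eq.
  exact: (equiv_scalarM HA hJ (quot_charP x) (quot_charP y)).
- by exists one; rewrite (quot_char_eq (equiv_scalar1 one hJ)) oner_neq0.
Qed.

End QuotientCharacter.

Lemma closed_char_eq (R : realType) (A : completeNormedModType R[i])
    (mul : A -> A -> A) (one : A) (phi psi : A -> R[i]) :
  is_comBanachAlg mul one -> character mul phi -> character mul psi ->
  closed [set a | phi a = psi a].
Proof.
move=> HA hphi hpsi x /closure_normP clx; apply/eqP; rewrite -subr_eq0 -normr_le0.
apply/ler_addgt0Pr => e e0; rewrite add0r.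
have [y /= eqy xy] := clx _ (divr_gt0 e0 (ltr0n _ 2)).
have -> : phi x - psi x = (phi x - phi y) - (psi x - psi y).
  by rewrite eqy opprB addrA subrK.
apply: le_trans (ler_normB _ _) _; rewrite [e]splitr.
by apply: lerD; apply: le_trans _ (ltW xy); apply: (char_lipschitz HA).
Qed.

Lemma char_eq_on_generators (R : realType) (A : completeNormedModType R[i])
    (mul : A -> A -> A) (one : A) (G : set A) (phi psi : A -> R[i]) :
  is_comBanachAlg mul one -> generates mul one G ->
  character mul phi -> character mul psi -> {in G, phi =1 psi} -> phi = psi.
Proof.
move=> HA hgen hphi hpsi eqG.
suff eqA : [set a | phi a = psi a] = setT.
  by apply: funext => a; have : [set: A] a by []; rewrite -eqA.
apply: hgen => [|g Gg]; last by apply: eqG; rewrite inE.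
split=> /=; last exact: (closed_char_eq HA hphi hpsi).
- by rewrite (char1 HA hphi) (char1 HA hpsi).
- by move=> x y ex ey; rewrite (charD hphi) (charD hpsi) ex ey.
- by move=> k x ex; rewrite (charZ hphi) (charZ hpsi) ex.
- by move=> x y ex ey; rewrite (charM hphi) (charM hpsi) ex ey.
Qed.

Section SpectralCharacter.
Variables (R : realType) (A : completeNormedModType R[i]).
Variables (mul : A -> A -> A) (one : A).
Hypothesis HA : is_comBanachAlg mul one.
Variables (X : Type) (f : X -> A).

Definition spectral_ideal (lam : X -> R[i]) : set A :=
  closure (ideal_gen mul [set lam x *: one - f x | x in [set: X]]).

Definition spectral_char (lam : X -> R[i]) : A -> R[i] :=
  quot_char one (spectral_ideal lam).

Hypothesis hgen : generates mul one [set f x | x in [set: X]].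
Variable lam : X -> R[i].
Hypothesis hlam : joint_spectrum mul one f lam.

Lemma spectral_ideal_ideal : ideal mul (spectral_ideal lam).
Proof. exact: (closure_ideal HA (ideal_gen_ideal HA _)). Qed.

Lemma spectral_ideal_proper : ~ spectral_ideal lam one.
Proof. exact: (one_notin_closure_ideal HA (ideal_gen_ideal HA _) hlam). Qed.

Lemma equiv_scalar_gen x : equiv_scalar one (spectral_ideal lam) (f x) (lam x).
Proof. by apply/subset_closure/(sub_ideal_gen HA); exists x. Qed.

Lemma spectral_ideal_full a : scalar_mod one (spectral_ideal lam) a.
Proof.
suff -> : scalar_mod one (spectral_ideal lam) = setT by [].
apply: hgen => [|_ [x _ <-]]; last by exists (lam x); exact: equiv_scalar_gen.
exact: (scalar_mod_subalgebra HA spectral_ideal_ideal (@closed_closure _ _)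
  spectral_ideal_proper).
Qed.

Lemma spectral_char_character : character mul (spectral_char lam).
Proof.
exact: (quot_char_character HA spectral_ideal_ideal spectral_ideal_proper
  spectral_ideal_full).
Qed.

Lemma spectral_char_gen x : spectral_char lam (f x) = lam x.
Proof.
apply: (quot_char_eq HA spectral_ideal_ideal spectral_ideal_proper spectral_ideal_full).
exact: equiv_scalar_gen.
Qed.

End SpectralCharacter.

Lemma near_ptws_eval (R : realType) (A : completeNormedModType R[i]) (a : A)
    (phi0 : {ptws A -> R[i]}) (e : R[i]) :
  0 < e -> nbhs phi0 [set phi : {ptws A -> R[i]} | `|phi0 a - phi a| < e].
Proof.
move=> e0.
have h := (@pointwise_cvgP A R[i] (nbhs phi0) phi0 _).1 (@cvg_id _ (nbhs phi0)) a.
have : nbhs phi0 ((fun g : {ptws A -> R[i]} => g a) @^-1` ball (phi0 a) e).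
  by have := h (nbhs_filter phi0) _ (nbhsx_ballx (phi0 a) e e0); rewrite nbhs_filterE.
by apply: filterS.
Qed.

Lemma continuous_comp_char (R : realType) (A : completeNormedModType R[i])
    (mul : A -> A -> A) (one : A) (X : topologicalType) (f : X -> A) :
  is_comBanachAlg mul one -> compact [set: X] -> continuous f ->
  {within (char_space mul : set {ptws A -> R[i]}),
    continuous ((fun phi => phi \o f) : {ptws A -> R[i]} -> {uniform X -> R[i]})}.
Proof.
move=> HA hX hf; apply/subspace_continuousP => phi0 hphi0 P /uniform_nbhs[E [+ sEP]].
rewrite -entourage_ballE => -[e /= e0 sE].
have e3 : 0 < e / 3 by rewrite divr_gt0.
set F := within (char_space mul : set {ptws A -> R[i]}) (nbhs phi0).
suff : \forall phi \near F,
    forall y, `|phi0 (f y) - (phi : A -> R[i]) (f y)| < e.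
  by apply: filterS => phi h; apply: sEP => y _; apply: sE; exact: h.
(* Characters are 1-Lipschitz, so the [phi \o f] are equicontinuous and
   compactness of [X] turns closeness at finitely many points into uniform
   closeness. *)
have : \forall phi \near F, [set: X] `<=`
    (fun y => `|phi0 (f y) - (phi : A -> R[i]) (f y)| < e).
  apply: ((compact_near_coveringP [set: X]).1 hX) => x _.
  exists ([set y | `|f x - f y| < e / 3],
          [set phi : {ptws A -> R[i]} | char_space mul phi /\
             `|phi0 (f x) - phi (f x)| < e / 3]).
    split.
      have : nbhs x (f @^-1` ball (f x) (e / 3)) by apply: hf; apply: nbhsx_ballx.
      by apply: filterS => y /=; rewrite -ball_normE.
    by apply: filterS (near_ptws_eval (f x) phi0 e3) => phi h hc.
  case=> y phi /= [xy [hphi phixy]].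
  have -> : phi0 (f y) - phi (f y) = (phi0 (f y) - phi0 (f x)) +
      (phi0 (f x) - phi (f x)) + (phi (f x) - phi (f y)).
    by rewrite [X in _ = X + _]addrA subrK addrA subrK.
  rewrite [e]thirdr; apply: le_lt_trans (ler_normD _ _) (ltrD _ _).
    apply: le_lt_trans (ler_normD _ _) (ltrD _ phixy).
    by rewrite distrC (le_lt_trans (char_lipschitz HA hphi0 _ _)).
  exact: le_lt_trans (char_lipschitz HA hphi _ _) xy.
by apply: filterS => phi h y; apply: h.
Qed.

Section SpectralCharContinuity.
Variables (R : realType) (A : completeNormedModType R[i]).
Variables (mul : A -> A -> A) (one : A).
Hypothesis HA : is_comBanachAlg mul one.
Variables (X : topologicalType) (f : X -> A).
Hypothesis hgen : generates mul one [set f x | x in [set: X]].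

Local Notation spec := (joint_spectrum mul one f).
Local Notation chi := (spectral_char mul one f).
Let chiC lam (hlam : spec lam) := spectral_char_character HA hgen hlam.

Definition spectral_eval_continuous (a : A) : Prop :=
  forall lam0 : {uniform X -> R[i]}, spec lam0 -> forall e : R[i], 0 < e ->
  nbhs lam0 [set lam : {uniform X -> R[i]} | spec lam -> `|chi lam0 a - chi lam a| < e].

Lemma spectral_eval_continuous_one : spectral_eval_continuous one.
Proof.
move=> lam0 hl0 e e0; apply: filterE => lam hl.
by rewrite (char1 HA (chiC hl0)) (char1 HA (chiC hl)) subrr normr0.
Qed.

Lemma spectral_eval_continuous_gen x : spectral_eval_continuous (f x).
Proof.
move=> lam0 hl0 e e0.
have : nbhs lam0 [set lam : {uniform X -> R[i]} | forall y, [set: X] y ->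
    [set xy | ball xy.1 e xy.2] (lam0 y, lam y)].
  apply/uniform_nbhs; exists [set xy | ball xy.1 e xy.2]; split => //.
  exact: (entourage_ball _ (PosNum e0)).
apply: filterS => lam near_lam hl.
by rewrite !spectral_char_gen //; exact: near_lam.
Qed.

Lemma spectral_eval_continuousD a b : spectral_eval_continuous a ->
  spectral_eval_continuous b -> spectral_eval_continuous (a + b).
Proof.
move=> ca cb lam0 hl0 e e0; have e2 : 0 < e / 2 by rewrite divr_gt0.
apply: filterS2 (ca _ hl0 _ e2) (cb _ hl0 _ e2) => lam na nb hl.
rewrite (charD (chiC hl0)) (charD (chiC hl)) opprD addrACA [e]splitr.
exact: le_lt_trans (ler_normD _ _) (ltrD (na hl) (nb hl)).
Qed.

Lemma spectral_eval_continuousZ k a : spectral_eval_continuous a ->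
  spectral_eval_continuous (k *: a).
Proof.
move=> ca lam0 hl0 e e0.
apply: filterS (ca _ hl0 _ (divr_gt0 e0 (ltr_wpDl (normr_ge0 k) ltr01))) => lam na hl.
rewrite (charZ (chiC hl0)) (charZ (chiC hl)) -mulrBr normrM.
exact: mul_lt_of_lt_div_succ (na hl).
Qed.

Lemma spectral_eval_continuousM a b : spectral_eval_continuous a ->
  spectral_eval_continuous b -> spectral_eval_continuous (mul a b).
Proof.
move=> ca cb lam0 hl0 e e0; set M := `|a| + `|b|.
have M0 : 0 <= M by rewrite addr_ge0.
have e' : 0 < e / 2 / (M + 1) by rewrite !divr_gt0 // ltr_wpDl.
apply: filterS2 (ca _ hl0 _ e') (cb _ hl0 _ e') => lam na nb hl.
rewrite (charM (chiC hl0)) (charM (chiC hl)).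
set x0 := chi lam0 a; set y0 := chi lam0 b; set x1 := chi lam a; set y1 := chi lam b.
have -> : x0 * y0 - x1 * y1 = x0 * (y0 - y1) + (x0 - x1) * y1 by ring.
have bound_x0 : `|x0| <= M by rewrite (le_trans (norm_char_le HA (chiC hl0) a)) ?lerDl.
have bound_y1 : `|y1| <= M by rewrite (le_trans (norm_char_le HA (chiC hl) b)) ?lerDr.
apply: le_lt_trans (ler_normD _ _) _; rewrite !normrM [e]splitr; apply: ltrD.
  apply: le_lt_trans (ler_wpM2r (normr_ge0 _) bound_x0) _.
  exact: mul_lt_of_lt_div_succ M0 _ (nb hl).
rewrite mulrC; apply: le_lt_trans (ler_wpM2r (normr_ge0 _) bound_y1) _.
exact: mul_lt_of_lt_div_succ M0 _ (na hl).
Qed.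

Lemma spectral_eval_continuous_closed : closed spectral_eval_continuous.
Proof.
move=> a /closure_normP cla lam0 hl0 e e0; have e3 : 0 < e / 3 by rewrite divr_gt0.
have [b cb ab] := cla _ e3.
apply: filterS (cb _ hl0 _ e3) => lam nb hl.
have -> : chi lam0 a - chi lam a =
    (chi lam0 a - chi lam0 b) + (chi lam0 b - chi lam b) + (chi lam b - chi lam a).
  by rewrite [X in _ = X + _]addrA subrK addrA subrK.
rewrite [e]thirdr; apply: le_lt_trans (ler_normD _ _) (ltrD _ _).
  apply: le_lt_trans (ler_normD _ _) (ltrD _ (nb hl)).
  exact: le_lt_trans (char_lipschitz HA (chiC hl0) _ _) ab.
by rewrite distrC (le_lt_trans (char_lipschitz HA (chiC hl) _ _)).
Qed.

Lemma spectral_eval_continuous_all a : spectral_eval_continuous a.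
Proof.
suff -> : spectral_eval_continuous = setT by [].
apply: hgen => [|_ [x _ <-]]; last exact: spectral_eval_continuous_gen.
split.
- exact: spectral_eval_continuous_one.
- exact: spectral_eval_continuousD.
- exact: spectral_eval_continuousZ.
- exact: spectral_eval_continuousM.
- exact: spectral_eval_continuous_closed.
Qed.

Lemma continuous_spectral_char :
  {within (spec : set {uniform X -> R[i]}),
    continuous ((fun lam => chi lam) : {uniform X -> R[i]} -> {ptws A -> R[i]})}.
Proof.
apply/subspace_continuousP => lam0 hl0.
apply/(@pointwise_cvgP A R[i] _ (chi lam0) _).2 => a P /nbhs_ballP[e e0 sP].
rewrite nbhs_filterE /within.
apply: filterS (spectral_eval_continuous_all a hl0 e0) => lam h hl.
by apply: sP; exact: h.
Qed.

End SpectralCharContinuity.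

Unset Implicit Arguments.
Set Strict Implicit.

Theorem proposition3p1 (R : realType) (A : completeNormedModType R[i])
    (mul : A -> A -> A) (one : A) (X : topologicalType) (f : X -> A) :
  is_comBanachAlg mul one ->
  hausdorff_space X -> compact [set: X] -> continuous f ->
  generates mul one [set f x | x in [set: X]] ->
  let Phi : {ptws A -> R[i]} -> {uniform X -> R[i]} := fun phi => phi \o f in
  [/\ set_bij (char_space mul) (joint_spectrum mul one f) Phi,
      {within (char_space mul : set {ptws A -> R[i]}), continuous Phi}
    & exists Psi : {uniform X -> R[i]} -> {ptws A -> R[i]},
        [/\ {in char_space mul, cancel Phi Psi},
            {in joint_spectrum mul one f, cancel Psi Phi}
          & {within (joint_spectrum mul one f : set {uniform X -> R[i]}),
              continuous Psi}]].
Proof.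
move=> HA _ hX hf hgen Phi; set Psi := spectral_char mul one f.
have PsiK lam : joint_spectrum mul one f lam -> Phi (Psi lam) = lam.
  by move=> hlam; apply: funext => x; exact: (spectral_char_gen HA hgen hlam).
have PhiK phi : character mul phi -> Psi (Phi phi) = phi.
  move=> hphi; have hspec : joint_spectrum mul one f (Phi phi).
    exact: (char_joint_spectrum HA hphi).
  apply: (char_eq_on_generators HA hgen (spectral_char_character HA hgen hspec) hphi).
  by move=> _ /set_mem[x _ <-]; exact: (spectral_char_gen HA hgen hspec).
split.
- split.
  + by move=> phi hphi; exact: (char_joint_spectrum HA hphi).
  + by move=> phi psi /[!inE] hphi hpsi eq; rewrite -(PhiK _ hphi) -(PhiK _ hpsi) eq.
  + move=> lam hlam; exists (Psi lam); last exact: PsiK.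
    exact: (spectral_char_character HA hgen hlam).
- exact: (continuous_comp_char HA hX hf).
- exists Psi; split.
  + by move=> phi /[!inE]; exact: PhiK.
  + by move=> lam /[!inE]; exact: PsiK.
  + exact: (continuous_spectral_char HA hgen).
Qed.
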